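(* The family $\mathcal A$ of achievement sets contained in $[0,1]$ is nowhere dense in $K_0([0,1])$ (with respect to the Pompeiu–Hausdorff metric).
   Context: For an absolutely convergent real series $\sum_n a_n$, its achievement set is $E(a_n):=\{\sum_{n\in A}a_n:\ A\subset\mathbb N\}$. $\mathcal A$ denotes the family of all such sets $E(a_n)$ contained in $[0,1]$. $K_0([0,1])$ is the family of compact subsets of $[0,1]$ containing $0$, with the Pompeiu–Hausdorff metric $d_H(A,B)=\max\{\sup_{a\in A}\operatorname{dist}(a,B),\sup_{b\in B}\operatorname{dist}(b,A)\}$. *)

From Stdlib Require Import Reals.
From Coquelicot Require Import Coquelicot.
Open Scope R_scope.

Definition abs_conv (a : nat -> R) : Prop := ex_series (fun n => Rabs (a n)).

(* Achievement set E(a_n) = { sum_{n in A} a_n : A subset N };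
   a subset A of N is encoded by its indicator A : nat -> bool. *)
Definition achievement_set (a : nat -> R) : R -> Prop :=
  fun x => exists A : nat -> bool,
    is_series (fun n => if A n then a n else 0) x.

Definition in_calA (S : R -> Prop) : Prop :=
  exists a : nat -> R, abs_conv a /\
    (forall x, S x <-> achievement_set a x) /\
    (forall x, S x -> 0 <= x <= 1).

Definition K0 (K : R -> Prop) : Prop :=
  compact K /\ (forall x, K x -> 0 <= x <= 1) /\ K 0.

Definition dist_set (x : R) (B : R -> Prop) : R :=
  real (Glb_Rbar (fun d => exists b, B b /\ d = Rabs (x - b))).

Definition excess (A B : R -> Prop) : R :=
  real (Lub_Rbar (fun d => exists a, A a /\ d = dist_set a B)).

(* Pompeiu-Hausdorff distance (finite for nonempty subsets of [0,1]). *)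
Definition dH (A B : R -> Prop) : R := Rmax (excess A B) (excess B A).

Definition closure_K0 (F : (R -> Prop) -> Prop) (K : R -> Prop) : Prop :=
  K0 K /\ forall eps, 0 < eps -> exists L, K0 L /\ F L /\ dH K L < eps.

Definition interior_K0 (F : (R -> Prop) -> Prop) (K : R -> Prop) : Prop :=
  K0 K /\ exists eps, 0 < eps /\ forall L, K0 L -> dH K L < eps -> F L.

Definition nowhere_dense_K0 (F : (R -> Prop) -> Prop) : Prop :=
  forall K, ~ interior_K0 (closure_K0 F) K.

(* Every achievement set [E] in [0,1] is symmetric about half its largest
   element [P = sum a_n]: complementing the index set sends [e] to [P - e].
   Given any [K] in [K_0([0,1])] and small [eta], cut out a gap of width [3 eta]
   just below the top of [K] (after padding it with [[0, eta]] and a top point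
   [T]); the resulting [L] is [5 eta]-close to [K].  A symmetric set [E] close to
   [L] would have its maximum near [T] and contain a point near [eta/2], hence
   also one near [T - eta/2], i.e. inside the gap.  So the closure of [cal A]
   misses an [eta/6]-ball around [L] inside every ball around [K]. *)
From Stdlib Require Import Reals Lra Classical.
From Coquelicot Require Import Coquelicot.
Open Scope R_scope.

Lemma Rabs_lt_between (x c : R) : Rabs x < c -> - c < x < c.
Proof. intros H; destruct (Rabs_def2 _ _ H); lra. Qed.

Lemma dist_set_le (x : R) (B : R -> Prop) (b c : R) :
  B b -> Rabs (x - b) <= c -> 0 <= c -> dist_set x B <= c.
Proof.
  intros Hb Hc Hc0. unfold dist_set.
  destruct (Glb_Rbar_correct (fun d => exists b, B b /\ d = Rabs (x - b))) as [Hlb _].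
  assert (H := Hlb (Rabs (x - b)) (ex_intro _ b (conj Hb eq_refl))).
  destruct (Glb_Rbar _) as [g| |]; simpl in *; lra.
Qed.

Lemma dist_set_lt (x : R) (B : R -> Prop) (b0 c : R) :
  B b0 -> dist_set x B < c -> exists b, B b /\ Rabs (x - b) < c.
Proof.
  intros Hb0 Hd. apply NNPP; intro Hn. unfold dist_set in Hd.
  destruct (Glb_Rbar_correct (fun d => exists b, B b /\ d = Rabs (x - b))) as [Hlb Hglb].
  assert (H1 := Hlb (Rabs (x - b0)) (ex_intro _ b0 (conj Hb0 eq_refl))).
  assert (H2 : Rbar_le c (Glb_Rbar (fun d => exists b, B b /\ d = Rabs (x - b)))).
  { apply Hglb. intros d [b [Hb ->]]. simpl.
    destruct (Rle_lt_dec c (Rabs (x - b))) as [h|h]; auto.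
    exfalso; apply Hn; exists b; auto. }
  destruct (Glb_Rbar _) as [g| |]; simpl in *; lra.
Qed.

Lemma excess_le (A B : R -> Prop) (c : R) :
  (forall a, A a -> dist_set a B <= c) -> 0 <= c -> excess A B <= c.
Proof.
  intros H Hc. unfold excess.
  destruct (Lub_Rbar_correct (fun d => exists a, A a /\ d = dist_set a B)) as [_ Hlub].
  assert (H2 : Rbar_le (Lub_Rbar (fun d => exists a, A a /\ d = dist_set a B)) c).
  { apply Hlub. intros d [a [Ha ->]]. simpl. auto. }
  destruct (Lub_Rbar _) as [g| |]; simpl in *; lra.
Qed.

(* The bound [c] is needed because [excess] is [0] when the supremum is infinite. *)
Lemma dist_set_le_excess (A B : R -> Prop) (a c : R) :
  A a -> (forall a', A a' -> dist_set a' B <= c) -> dist_set a B <= excess A B.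
Proof.
  intros Ha H. unfold excess.
  destruct (Lub_Rbar_correct (fun d => exists a, A a /\ d = dist_set a B)) as [Hub Hlub].
  assert (H1 := Hub (dist_set a B) (ex_intro _ a (conj Ha eq_refl))).
  assert (H2 : Rbar_le (Lub_Rbar (fun d => exists a, A a /\ d = dist_set a B)) c).
  { apply Hlub. intros d [a' [Ha' ->]]. simpl. auto. }
  destruct (Lub_Rbar _) as [g| |]; simpl in *; lra.
Qed.

Definition unit_set0 (A : R -> Prop) : Prop := (forall x, A x -> 0 <= x <= 1) /\ A 0.

Lemma K0_unit_set0 (K : R -> Prop) : K0 K -> unit_set0 K.
Proof. intros [_ [H0 H1]]; split; assumption. Qed.

Lemma dist_set_le1 (A B : R -> Prop) (a : R) :
  unit_set0 A -> unit_set0 B -> A a -> dist_set a B <= 1.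
Proof.
  intros [HA _] [_ HB0] Ha. apply (dist_set_le a B 0); auto; [|lra].
  apply Rabs_le. specialize (HA a Ha). lra.
Qed.

Lemma excess_lt_near (A B : R -> Prop) (d : R) :
  unit_set0 A -> unit_set0 B -> excess A B < d ->
  forall a, A a -> exists b, B b /\ Rabs (a - b) < d.
Proof.
  intros UA UB Hd a Ha. apply (dist_set_lt a B 0); [apply UB|].
  assert (dist_set a B <= excess A B); [|lra].
  apply (dist_set_le_excess _ _ _ 1); auto.
  intros a' Ha'; exact (dist_set_le1 A B a' UA UB Ha').
Qed.

Lemma dH_lt_near (A B : R -> Prop) (d : R) : unit_set0 A -> unit_set0 B -> dH A B < d ->
  (forall a, A a -> exists b, B b /\ Rabs (a - b) < d) /\
  (forall b, B b -> exists a, A a /\ Rabs (b - a) < d).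
Proof.
  intros UA UB Hd. unfold dH in Hd.
  assert (H1 := Rmax_l (excess A B) (excess B A)).
  assert (H2 := Rmax_r (excess A B) (excess B A)).
  split; apply excess_lt_near; auto; lra.
Qed.

Lemma dH_le (A B : R -> Prop) (c : R) : 0 <= c ->
  (forall a, A a -> exists b, B b /\ Rabs (a - b) <= c) ->
  (forall b, B b -> exists a, A a /\ Rabs (b - a) <= c) -> dH A B <= c.
Proof.
  intros Hc H1 H2. unfold dH. apply Rmax_lub; apply excess_le; auto.
  - intros a Ha. destruct (H1 a Ha) as [b [Hb Hab]]. apply (dist_set_le a B b); auto.
  - intros b Hb. destruct (H2 b Hb) as [a [Ha Hab]]. apply (dist_set_le b A a); auto.
Qed.

Lemma open_set_ext (D D' : R -> Prop) :
  open_set D -> (forall x, D x <-> D' x) -> open_set D'.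
Proof.
  intros H E x Hx. destruct (H x (proj2 (E x) Hx)) as [del Hd].
  exists del. intros y Hy. apply E, Hd, Hy.
Qed.

Lemma closed_set_ext (D D' : R -> Prop) :
  closed_set D -> (forall x, D x <-> D' x) -> closed_set D'.
Proof.
  intros H E. apply (open_set_ext _ _ H).
  intros x. unfold complementary. rewrite (E x). tauto.
Qed.

Lemma closed_set_union (D1 D2 : R -> Prop) :
  closed_set D1 -> closed_set D2 -> closed_set (fun x => D1 x \/ D2 x).
Proof.
  intros H1 H2. apply (open_set_ext _ _ (open_set_P3 _ _ H1 H2)).
  intros x; unfold intersection_domain, complementary; tauto.
Qed.

Lemma closed_set_inter (D1 D2 : R -> Prop) :
  closed_set D1 -> closed_set D2 -> closed_set (fun x => D1 x /\ D2 x).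
Proof.
  intros H1 H2. apply (open_set_ext _ _ (open_set_P2 _ _ H1 H2)).
  intros x; unfold union_domain, complementary; split; [|tauto].
  intros H. apply NNPP. tauto.
Qed.

Lemma closed_set_interval (a b : R) : closed_set (fun x => a <= x <= b).
Proof. apply compact_P2, compact_P3. Qed.

Lemma closed_set_singleton (a : R) : closed_set (fun x => x = a).
Proof.
  apply (closed_set_ext _ _ (closed_set_interval a a)). intros x; lra.
Qed.

Lemma achievement_set_reflect (a : nat -> R) : abs_conv a ->
  exists P, achievement_set a P /\
    forall e, achievement_set a e -> achievement_set a (P - e).
Proof.
  intros Ha.
  assert (HP := Series_correct a (ex_series_Rabs a Ha)).
  exists (Series a). split; [exists (fun _ => true); exact HP|].
  intros e [A HA]. exists (fun n => negb (A n)).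
  eapply is_series_ext; [|exact (is_series_minus _ _ _ _ HP HA)].
  intros n. unfold plus, opp; simpl. destruct (A n); simpl; ring.
Qed.

Lemma in_calA_reflect (E : R -> Prop) : in_calA E ->
  exists P, E P /\ forall e, E e -> E (P - e).
Proof.
  intros [a [Ha [HE _]]].
  destruct (achievement_set_reflect a Ha) as [P [HP Hsym]].
  exists P. split; [apply HE, HP|].
  intros e He. apply HE, Hsym, HE, He.
Qed.

Lemma reflective_far_from_gapped (L E : R -> Prop) (T eta : R) :
  0 < eta -> unit_set0 L -> unit_set0 E ->
  L T -> L (eta / 2) -> (forall x, L x -> x <= T - 3 * eta \/ x = T) ->
  (exists P, E P /\ forall e, E e -> E (P - e)) ->
  eta / 6 <= dH L E.
Proof.
  intros Heta UL UE HT Heta2 Hgap [P [HP Hsym]].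
  apply Rnot_lt_le; intro Hd.
  destruct (dH_lt_near L E (eta / 6) UL UE Hd) as [Near Near'].
  assert (HPlow : T - eta / 6 < P).
  { destruct (Near T HT) as [e1 [He1 d1]]. apply Rabs_lt_between in d1.
    assert (h := proj1 UE _ (Hsym e1 He1)). lra. }
  assert (HPhigh : P < T + eta / 6).
  { destruct (Near' P HP) as [l1 [Hl1 d1]]. apply Rabs_lt_between in d1.
    destruct (Hgap l1 Hl1); lra. }
  destruct (Near (eta / 2) Heta2) as [e2 [He2 d2]]. apply Rabs_lt_between in d2.
  destruct (Near' (P - e2) (Hsym e2 He2)) as [l2 [Hl2 d3]].
  apply Rabs_lt_between in d3.
  destruct (Hgap l2 Hl2); lra.
Qed.

Lemma K0_near_max (K : R -> Prop) (eta : R) : K0 K -> 0 < eta ->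
  exists M k0, (forall x, K x -> x <= M) /\ 0 <= M <= 1 /\ K k0 /\ M - eta < k0.
Proof.
  intros [_ [HK01 HK0]] Heta.
  destruct (completeness K) as [M [HMub HMlub]].
  { exists 1. intros x Hx. apply (HK01 x Hx). }
  { exists 0; exact HK0. }
  assert (HM1 : M <= 1) by (apply HMlub; intros x Hx; apply (HK01 x Hx)).
  assert (HM0 : 0 <= M) by (apply HMub; exact HK0).
  assert (Hk0 : exists k0, K k0 /\ M - eta < k0).
  { apply NNPP; intro Hn.
    assert (M <= M - eta); [|lra].
    apply HMlub. intros x Hx. destruct (Rle_lt_dec x (M - eta)) as [h|h]; auto.
    exfalso; apply Hn; exists x; auto. }
  destruct Hk0 as [k0 Hk0]. exists M, k0. auto.
Qed.

Lemma gapped_approximation (K : R -> Prop) (eta : R) :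
  K0 K -> 0 < eta -> 10 * eta <= 1 ->
  exists L T, K0 L /\ dH K L <= 5 * eta /\ L T /\ L (eta / 2) /\
    (forall x, L x -> x <= T - 3 * eta \/ x = T).
Proof.
  intros HK Heta Heta1.
  destruct (K0_near_max K eta HK Heta) as [M [k0 [HMub [HM [Hk0 Hk0M]]]]].
  destruct HK as [HKc [HK01 HK0]].
  (* [T >= 5 eta] keeps [[0, eta]] below the gap [(T - 3 eta, T)]. *)
  set (T := Rmax M (5 * eta)).
  assert (HT : M <= T /\ 5 * eta <= T /\ T <= 1).
  { unfold T; split; [apply Rmax_l|split; [apply Rmax_r|apply Rmax_lub; lra]]. }
  set (L := fun x => (0 <= x <= eta) \/ (K x /\ 0 <= x <= T - 3 * eta) \/ x = T).
  assert (HL01 : forall x, L x -> 0 <= x <= 1) by (intros x [h|[[h1 h2]|h]]; lra).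
  exists L, T. split; [|split; [|split; [|split]]].
  - split; [|split; [exact HL01|left; lra]].
    apply compact_P5; [|exists 0, 1; exact HL01].
    apply closed_set_union; [apply closed_set_interval|].
    apply closed_set_union; [|apply closed_set_singleton].
    apply closed_set_inter; [apply compact_P2, HKc|apply closed_set_interval].
  - apply dH_le; [lra| |].
    + intros k Hk. assert (h1 := HK01 k Hk). assert (h2 := HMub k Hk).
      destruct (Rle_lt_dec k (T - 3 * eta)) as [h|h].
      * exists k. split; [right; left; split; [auto|lra]|]. apply Rabs_le; lra.
      * exists T. split; [right; right; reflexivity|]. apply Rabs_le; lra.
    + intros l [h|[[h1 h2]|h]].
      * exists 0. split; auto. apply Rabs_le; lra.
      * exists l. split; auto. apply Rabs_le; lra.
      * destruct (Rle_lt_dec M (5 * eta)) as [hm|hm].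
        -- exists 0. split; auto. apply Rabs_le.
           assert (T = 5 * eta) by (unfold T; rewrite Rmax_right; lra). lra.
        -- exists k0. split; auto. apply Rabs_le.
           assert (T = M) by (unfold T; rewrite Rmax_left; lra).
           assert (h3 := HMub k0 Hk0). lra.
  - right; right; reflexivity.
  - left; lra.
  - intros x [h|[[h1 h2]|h]]; lra.
Qed.

Theorem mainTheorem15 : nowhere_dense_K0 in_calA.
Proof.
  intros K [HK [eps [Heps Hint]]].
  set (eta := Rmin eps 1 / 10).
  assert (Heta : 0 < eta) by (unfold eta; apply Rmin_case; lra).
  assert (Heta_eps : 10 * eta <= eps) by (unfold eta; assert (h := Rmin_l eps 1); lra).
  assert (Heta_1 : 10 * eta <= 1) by (unfold eta; assert (h := Rmin_r eps 1); lra).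
  destruct (gapped_approximation K eta HK Heta Heta_1)
    as [L [T [HL [HKL [HLT [HLeta Hgap]]]]]].
  destruct (Hint L HL) as [_ Hcl]; [lra|].
  destruct (Hcl (eta / 6)) as [E [HE [HEA HLE]]]; [lra|].
  assert (Hfar := reflective_far_from_gapped L E T eta Heta (K0_unit_set0 L HL)
    (K0_unit_set0 E HE) HLT HLeta Hgap (in_calA_reflect E HEA)).
  lra.
Qed.
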